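(* Let $U>0$. For every integer $L>\frac{8}{U}$ let $m_L$ be an integer with $\frac{L}{2} < m_L < \frac{3L}{2}$, and let $\xi_{m_L}$ denote the unique positive solution $\xi$ of $$\sinh(\xi) = -\frac{U}{4\cos(m_L\pi/L)}\,\frac{\sinh(\xi L)}{\cosh(\xi L) - (-1)^{m_L}}.$$ Suppose $\lim_{L\to\infty} m_L\frac{\pi}{L} = q$ with $\frac{\pi}{2} < q < \frac{3\pi}{2}$. Then $$\lim_{L\to\infty}\xi_{m_L} = -\operatorname{arsinh}\left(\frac{U}{4\cos(q)}\right).$$
   Context: For $N=2$ electrons and one down spin on a lattice of length $L$, a $k$-$\Lambda$ two-string solution of the Lieb-Wu equations $e^{ik_jL} = \frac{\Lambda-\sin k_j - iU/4}{\Lambda - \sin k_j + iU/4}$ ($j=1,2$), $\prod_{j}\frac{\Lambda-\sin k_j - iU/4}{\Lambda - \sin k_j + iU/4}=1$, has $k_{1,2} = q\mp i\xi$ with $q = m\pi/L$, $\xi>0$ solving the displayed equation and $\Lambda = \sin(q)\cosh(\xi)$; for $U>0$, $L>8/U$ and $L/2<m<3L/2$ the displayed equation has exactly one positive solution. The result says that in the limit $L\to\infty$ these strings approach the ideal string positions $\sinh\xi = -U/(4\cos q)$. *)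

From Stdlib Require Export Reals ZArith.
Open Scope R_scope.

Definition string_eq (U : R) (L : nat) (m : Z) (xi : R) : Prop :=
  sinh xi = - (U / (4 * cos (IZR m * PI / INR L)))
            * (sinh (xi * INR L) / (cosh (xi * INR L) - powerRZ (-1) m)).

(* After clearing denominators, xi_L is the unique positive zero of
     F_L(x) = -4 cos(m_L pi/L) sinh x (cosh(xL) - (-1)^m_L) - U sinh(xL).
   Since cosh(xL) - sinh(xL) = exp(-xL) lies in (0, 1], F_L(x) differs from
   -(U + 4 cos(m_L pi/L) sinh x) sinh(xL) by at most 8 sinh x, while sinh(xL)
   grows without bound. Hence for large L the sign of F_L(x) is opposite to that
   of U + 4 cos q sinh x, which vanishes exactly at a = -arsinh(U/(4 cos q)).
   So F_L changes sign on [a - e, a + e] for every e > 0 and large L, and the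
   intermediate value theorem together with uniqueness traps xi_L there. *)

From Stdlib Require Import Reals Lra Psatz ZArith.
From Coquelicot Require Import Coquelicot.
Open Scope R_scope.

Lemma powerRZ_m1_cases (z : Z) : powerRZ (-1) z = 1 \/ powerRZ (-1) z = -1.
Proof.
  assert (pow_m1 : forall n, (-1) ^ n = 1 \/ (-1) ^ n = -1).
  { induction n as [|n [IH | IH]]; simpl; try rewrite IH; lra. }
  destruct z as [|p|p]; simpl; [lra | apply pow_m1 |].
  destruct (pow_m1 (Pos.to_nat p)) as [-> | ->]; [left | right]; field.
Qed.

Lemma exp_opp_bounds (x : R) : 0 <= x -> 0 < exp (- x) <= 1.
Proof.
  intros Hx.
  assert (Hinv : exp (- x) * exp x = 1).
  { rewrite <- exp_plus, Rplus_opp_l; apply exp_0. }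
  pose proof (exp_ineq1_le x); pose proof (exp_pos (- x)); nra.
Qed.

Lemma sinh_opp (x : R) : sinh (- x) = - sinh x.
Proof. unfold sinh; rewrite Ropp_involutive; field. Qed.

Lemma sinh_ge_half (x : R) : 0 <= x -> x / 2 <= sinh x.
Proof.
  intros Hx; unfold sinh.
  pose proof (exp_ineq1_le x); pose proof (exp_opp_bounds x Hx); lra.
Qed.

Lemma cosh_gt1 (x : R) : 0 < x -> 1 < cosh x.
Proof.
  intros Hx; unfold cosh; rewrite exp_Ropp.
  assert (Hex : 1 < exp x) by (rewrite <- exp_0; now apply exp_increasing).
  assert (Hinv : / exp x * exp x = 1) by (field; lra).
  pose proof (Rinv_0_lt_compat _ (exp_pos x)); nra.
Qed.

Lemma cosh_sub_sinh (x : R) : cosh x - sinh x = exp (- x).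
Proof. unfold cosh, sinh; field. Qed.

Lemma is_lim_seq_sinh_scal (x : R) :
  0 < x -> is_lim_seq (fun n => sinh (x * INR n)) p_infty.
Proof.
  intros Hx.
  apply is_lim_seq_le_p_loc with (u := fun n => x / 2 * INR n).
  - exists 0%nat; intros n _.
    pose proof (pos_INR n).
    replace (x / 2 * INR n) with (x * INR n / 2) by field.
    apply sinh_ge_half; nra.
  - apply is_lim_seq_mult with (l1 := x / 2) (l2 := p_infty);
      auto using is_lim_seq_const, is_lim_seq_INR.
    apply is_Rbar_mult_sym, is_Rbar_mult_p_infty_pos; simpl; lra.
Qed.

Lemma eventually_gt_mult_sinh (g : nat -> R) (gl x M : R) :
  is_lim_seq g gl -> 0 < gl -> 0 < x ->
  eventually (fun n => M < g n * sinh (x * INR n)).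
Proof.
  intros Hg Hgl Hx.
  assert (Hlim : is_lim_seq (fun n => g n * sinh (x * INR n)) p_infty).
  { apply is_lim_seq_mult with (l1 := gl) (l2 := p_infty); auto using is_lim_seq_sinh_scal.
    apply is_Rbar_mult_sym, is_Rbar_mult_p_infty_pos; simpl; lra. }
  now apply is_lim_seq_spec in Hlim.
Qed.

Definition string_residual (U c s l x : R) : R :=
  - 4 * c * sinh x * (cosh (x * l) - s) - U * sinh (x * l).

Lemma string_residual_approx (U c s l x : R) :
  -1 <= c <= 0 -> (s = 1 \/ s = -1) -> 0 <= x -> 0 <= l ->
  - 8 * sinh x <= string_residual U c s l x + (U + 4 * c * sinh x) * sinh (x * l)
  <= 8 * sinh x.
Proof.
  intros Hc Hs Hx Hl.
  replace (string_residual U c s l x + (U + 4 * c * sinh x) * sinh (x * l))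
    with (- 4 * c * sinh x * (exp (- (x * l)) - s))
    by (rewrite <- cosh_sub_sinh; unfold string_residual; ring).
  pose proof (exp_opp_bounds (x * l) ltac:(nra)).
  pose proof (sinh_ge_half x Hx).
  assert (Hk : 0 <= - c * sinh x <= sinh x) by nra.
  destruct Hs as [-> | ->]; split; nra.
Qed.

Lemma string_residual_neg (U c s l x : R) :
  -1 <= c <= 0 -> (s = 1 \/ s = -1) -> 0 <= x -> 0 <= l ->
  8 * sinh x < (U + 4 * c * sinh x) * sinh (x * l) -> string_residual U c s l x < 0.
Proof.
  intros Hc Hs Hx Hl Hgap.
  pose proof (string_residual_approx U c s l x Hc Hs Hx Hl); lra.
Qed.

Lemma string_residual_pos (U c s l x : R) :
  -1 <= c <= 0 -> (s = 1 \/ s = -1) -> 0 <= x -> 0 <= l ->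
  8 * sinh x < - (U + 4 * c * sinh x) * sinh (x * l) -> 0 < string_residual U c s l x.
Proof.
  intros Hc Hs Hx Hl Hgap.
  pose proof (string_residual_approx U c s l x Hc Hs Hx Hl); lra.
Qed.

Lemma continuity_string_residual (U c s l : R) : continuity (string_residual U c s l).
Proof. apply derivable_continuous; unfold string_residual; reg. Qed.

Lemma cos_momentum_neg (L : nat) (m : Z) :
  INR L / 2 < IZR m < 3 * INR L / 2 -> cos (IZR m * PI / INR L) < 0.
Proof.
  intros Hm; pose proof PI_RGT_0.
  assert (HL : 0 < INR L) by lra.
  apply cos_lt_0.
  - apply Rmult_lt_reg_r with (INR L); [lra|].
    replace (IZR m * PI / INR L * INR L) with (IZR m * PI) by (field; lra); nra.
  - apply Rmult_lt_reg_r with (INR L); [lra|].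
    replace (IZR m * PI / INR L * INR L) with (IZR m * PI) by (field; lra); nra.
Qed.

Lemma string_eq_of_residual_root (U : R) (L : nat) (m : Z) (x : R) :
  cos (IZR m * PI / INR L) < 0 -> 0 < x -> 0 < INR L ->
  string_residual U (cos (IZR m * PI / INR L)) (powerRZ (-1) m) (INR L) x = 0 ->
  string_eq U L m x.
Proof.
  unfold string_eq, string_residual.
  set (c := cos (IZR m * PI / INR L)); set (s := powerRZ (-1) m).
  intros Hc Hx HL Hroot.
  assert (Hden : 0 < cosh (x * INR L) - s).
  { pose proof (cosh_gt1 (x * INR L) ltac:(nra)).
    destruct (powerRZ_m1_cases m) as [Hs | Hs]; fold s in Hs; lra. }
  apply Rmult_eq_reg_r with (- 4 * c * (cosh (x * INR L) - s)); [| nra].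
  replace (- (U / (4 * c)) * (sinh (x * INR L) / (cosh (x * INR L) - s))
           * (- 4 * c * (cosh (x * INR L) - s)))
    with (U * sinh (x * INR L)) by (field; lra).
  lra.
Qed.

Lemma string_root_between (U : R) (L : nat) (m : Z) (b1 b2 : R) :
  let F := string_residual U (cos (IZR m * PI / INR L)) (powerRZ (-1) m) (INR L) in
  cos (IZR m * PI / INR L) < 0 -> 0 < b1 < b2 -> 0 < INR L -> F b1 < 0 -> 0 < F b2 ->
  exists z, b1 <= z <= b2 /\ string_eq U L m z.
Proof.
  intros F Hc Hb HL H1 H2.
  destruct (IVT F b1 b2 (continuity_string_residual _ _ _ _) ltac:(lra) H1 H2)
    as [z [Hz Hroot]].
  exists z; split; [exact Hz |].
  apply string_eq_of_residual_root; auto; lra.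
Qed.

Lemma ideal_string_position (U c : R) :
  0 < U -> c < 0 ->
  0 < - arcsinh (U / (4 * c)) /\ U + 4 * c * sinh (- arcsinh (U / (4 * c))) = 0.
Proof.
  intros HU Hc; split.
  - assert (Hneg : U / (4 * c) < 0).
    { apply Rmult_lt_reg_r with (- (4 * c)); [lra|].
      replace (U / (4 * c) * - (4 * c)) with (- U) by (field; lra); lra. }
    pose proof (arcsinh_lt _ _ Hneg) as Hlt; rewrite arcsinh_0 in Hlt; lra.
  - rewrite sinh_opp, sinh_arcsinh; field; lra.
Qed.

Section StringSequence.

Variables (U c : R) (m : nat -> Z) (xi : nat -> R).

Hypothesis xi_spec : forall L : nat, INR L > 8 / U ->
  INR L / 2 < IZR (m L) < 3 * INR L / 2 /\
  0 < xi L /\ string_eq U L (m L) (xi L) /\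
  (forall x, 0 < x -> string_eq U L (m L) x -> x = xi L).

Hypothesis cos_momentum_lim : is_lim_seq (fun L => cos (IZR (m L) * PI / INR L)) c.

Lemma eventually_string_gap (x sgn : R) :
  0 < x -> 0 < sgn * (U + 4 * c * sinh x) ->
  eventually (fun L => 8 * sinh x <
    sgn * (U + 4 * cos (IZR (m L) * PI / INR L) * sinh x) * sinh (x * INR L)).
Proof.
  intros Hx Hgap.
  apply eventually_gt_mult_sinh with (gl := sgn * (U + 4 * c * sinh x)); auto.
  exact (is_lim_seq_continuous (fun y => sgn * (U + 4 * y * sinh x)) _ c
           ltac:(reg) cos_momentum_lim).
Qed.

Lemma eventually_xi_between (b1 b2 : R) :
  0 < b1 < b2 -> 0 < U + 4 * c * sinh b1 -> U + 4 * c * sinh b2 < 0 ->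
  eventually (fun L => b1 <= xi L <= b2).
Proof.
  intros Hb Hgap1 Hgap2.
  assert (Hlarge : eventually (fun L => 8 / U < INR L)).
  { pose proof is_lim_seq_INR as HINR; now apply is_lim_seq_spec in HINR. }
  pose proof (eventually_string_gap b1 1 ltac:(lra) ltac:(lra)) as Hneg.
  pose proof (eventually_string_gap b2 (-1) ltac:(lra) ltac:(lra)) as Hpos.
  generalize (filter_and _ _ Hlarge (filter_and _ _ Hneg Hpos)).
  apply filter_imp; intros L [HL [Hgap_neg Hgap_pos]].
  destruct (xi_spec L HL) as [Hm [_ [_ Huniq]]].
  pose proof (cos_momentum_neg L (m L) Hm) as Hc.
  pose proof (COS_bound (IZR (m L) * PI / INR L)).
  assert (HL0 : 0 < INR L) by lra.
  destruct (string_root_between U L (m L) b1 b2 Hc Hb HL0) as [z [Hz Hzeq]].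
  - apply string_residual_neg; auto using powerRZ_m1_cases; lra.
  - apply string_residual_pos; auto using powerRZ_m1_cases; lra.
  - rewrite <- (Huniq z); auto; lra.
Qed.

End StringSequence.

Theorem mainTheorem4 (U q : R) (m : nat -> Z) (xi : nat -> R) :
  0 < U ->
  (forall L : nat, INR L > 8 / U ->
     INR L / 2 < IZR (m L) < 3 * INR L / 2 /\
     0 < xi L /\ string_eq U L (m L) (xi L) /\
     (forall x, 0 < x -> string_eq U L (m L) x -> x = xi L)) ->
  Un_cv (fun L => IZR (m L) * PI / INR L) q ->
  PI / 2 < q < 3 * PI / 2 ->
  Un_cv xi (- arcsinh (U / (4 * cos q))).
Proof.
  intros HU Hspec Hmomentum Hq.
  assert (Hc : cos q < 0) by (apply cos_lt_0; lra).
  assert (Hcos : is_lim_seq (fun L => cos (IZR (m L) * PI / INR L)) (cos q)).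
  { apply is_lim_seq_continuous; [apply continuity_cos | now apply is_lim_seq_Reals]. }
  destruct (ideal_string_position U (cos q) HU Hc) as [Ha Hbalance].
  set (a := - arcsinh (U / (4 * cos q))) in *.
  apply is_lim_seq_Reals, is_lim_seq_spec; intros eps.
  set (e := Rmin eps a / 2).
  assert (He : 0 < e /\ e < eps /\ e < a).
  { pose proof (cond_pos eps); unfold e, Rmin; destruct Rle_dec; lra. }
  pose proof (sinh_lt (a - e) a ltac:(lra)); pose proof (sinh_lt a (a + e) ltac:(lra)).
  generalize (eventually_xi_between U (cos q) m xi Hspec Hcos (a - e) (a + e)
                ltac:(lra) ltac:(nra) ltac:(nra)).
  apply filter_imp; intros L HL; apply Rabs_def1; lra.
Qed.
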